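(* Let $c_1>0$, $c_2>0$ and $k\in\mathbb{R}\setminus\{0\}$, and consider the system on $\mathbb{R}^3$ $$\dot z_1=\frac1{c_2}z_2z_3,\qquad \dot z_2=-\frac1{c_1}z_1z_3,\qquad \dot z_3=-\frac{k}{c_1}z_1 ,$$ whose equilibrium states are $\widetilde e_0=(0,0,0)$, $\widetilde e_2^m=(0,m,0)$ and $\widetilde e_3^m=(0,0,m)$ for $m\in\mathbb{R}\setminus\{0\}$. Then: (i) $\widetilde e_0$ and $\widetilde e_3^m$ ($m\neq0$) are nonlinear stable; (ii) $\widetilde e_2^m$ ($m\neq0$) is nonlinear stable if $km>0$ and unstable if $km<0$.
   Context: Nonlinear stable means stable in the sense of Lyapunov: for every neighbourhood $U$ of the equilibrium there is a neighbourhood $V$ such that every trajectory starting in $V$ remains in $U$ for all $t\ge0$; unstable means not Lyapunov stable. *)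

From Stdlib Require Import Reals.
From Coquelicot Require Import Coquelicot.
Open Scope R_scope.

Definition state := (R * R * R)%type.

Definition field (c1 c2 k : R) (z : state) : state :=
  match z with
  | (z1, z2, z3) => (z2 * z3 / c2, - (z1 * z3) / c1, - (k / c1) * z1)
  end.

Definition is_trajectory (f : state -> state) (z : R -> state) : Prop :=
  forall t : R, 0 <= t -> is_derive z t (f (z t)).

Definition lyap_stable (f : state -> state) (e : state) : Prop :=
  forall U : state -> Prop, locally e U ->
    exists V : state -> Prop, locally e V /\
      forall z : R -> state, is_trajectory f z -> V (z 0) ->
        forall t : R, 0 <= t -> U (z t).

Definition lyap_unstable (f : state -> state) (e : state) : Prop :=
  ~ lyap_stable f e.

(* The system has the two first integrals I1 = c2 z1^2 + c1 z2^2 and I2 = 2 k z2 - z3^2.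
   Near (0, 0, 0), and near (0, m, 0) when k m > 0, the deviation |I1 - I1(e)| + |I2 - I2(e)|
   from the values at the equilibrium e bounds the fourth power of the distance to e; being
   conserved and continuous, it keeps trajectories that start near e close to e.  Near
   (0, 0, m) the integrals only determine z3^2, but along such trajectories z3 cannot vanish,
   so by continuity it keeps the sign of m and the same bound applies.  When k m < 0, the
   level set of the integrals through (0, m, 0) carries an explicit orbit that tends to
   (0, m, 0) as t -> -oo and passes through (0, -m, 2 sqrt(-k m)), which rules out stability. *)

From Stdlib Require Import Reals Lra Psatz.
From Coquelicot Require Import Coquelicot.
Open Scope R_scope.

Lemma is_derive_eq (f : R -> R) x l l' : is_derive f x l -> l = l' -> is_derive f x l'.
Proof. now intros H <-. Qed.

Lemma is_derive_pair {V W : NormedModule R_AbsRing} (f : R -> V) (g : R -> W) x df dg :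
  is_derive f x df -> is_derive g x dg -> is_derive (fun t => (f t, g t)) x (df, dg).
Proof.
  intros Hf Hg.
  apply (filterdiff_comp'_2 f g pair x _ _ pair Hf Hg).
  apply filterdiff_ext_lin with (fun p => p).
  - apply filterdiff_ext with (fun p => p); [now intros []|apply filterdiff_id].
  - now intros [].
Qed.

Lemma is_derive_fst {V W : NormedModule R_AbsRing} (f : R -> V * W) x l :
  is_derive f x l -> is_derive (fun t => fst (f t)) x (fst l).
Proof. intros H. apply (filterdiff_comp f fst _ fst H), filterdiff_linear, is_linear_fst. Qed.

Lemma is_derive_snd {V W : NormedModule R_AbsRing} (f : R -> V * W) x l :
  is_derive f x l -> is_derive (fun t => snd (f t)) x (snd l).
Proof. intros H. apply (filterdiff_comp f snd _ snd H), filterdiff_linear, is_linear_snd. Qed.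

Lemma continuous_pair {U V W : UniformSpace} (f : U -> V) (g : U -> W) x :
  continuous f x -> continuous g x -> continuous (fun y => (f y, g y)) x.
Proof.
  intros Hf Hg P [eps HP]. change (locally x (fun y => P (f y, g y))).
  apply (filter_imp (fun y => ball (f x) eps (f y) /\ ball (g x) eps (g y))).
  - intros y Hy. now apply HP.
  - apply filter_and; now apply filterlim_locally.
Qed.

Lemma constant_of_is_derive_0 (g : R -> R) :
  (forall t, 0 <= t -> is_derive g t 0) -> forall t, 0 <= t -> g t = g 0.
Proof.
  intros Hd t Ht. destruct (Req_dec t 0) as [->|Hn]; [reflexivity|].
  destruct (MVT_gen g 0 t (fun _ => 0)) as [c [_ Hc]].
  - intros s Hs. rewrite Rmin_left in Hs by lra. apply Hd. lra.
  - intros s Hs. rewrite Rmin_left in Hs by lra. apply continuity_pt_filterlim.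
    apply (ex_derive_continuous g). exists 0. apply Hd. lra.
  - lra.
Qed.

Lemma positive_of_nonvanishing (w : R -> R) :
  (forall t, 0 <= t -> continuous w t) -> (forall t, 0 <= t -> w t <> 0) ->
  0 < w 0 -> forall t, 0 <= t -> 0 < w t.
Proof.
  intros Hc Hn H0 t Ht. destruct (Rlt_or_le 0 (w t)) as [h|h]; [exact h|exfalso].
  destruct (Req_dec t 0) as [->|ht]; [lra|].
  assert (Hwt : w t < 0) by (destruct h as [h|h]; [exact h|now destruct (Hn t Ht)]).
  destruct (Ranalysis5.IVT_interv (fun s => - w s) 0 t) as [s [Hs Hs0]]; try lra.
  - intros s Hs. apply continuity_pt_opp, continuity_pt_filterlim, Hc. lra.
  - apply (Hn s); lra.
Qed.

Definition z1 (p : state) : R := fst (fst p).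
Definition z2 (p : state) : R := snd (fst p).
Definition z3 (p : state) : R := snd p.

Lemma ball_state (e p : state) eps :
  ball e eps p <-> Rabs (z1 p - z1 e) < eps /\ Rabs (z2 p - z2 e) < eps /\ Rabs (z3 p - z3 e) < eps.
Proof.
  destruct e as [[a b] c], p as [[x y] w]. cbn. unfold prod_ball, ball; cbn.
  unfold prod_ball, AbsRing_ball, abs, minus, plus, opp; cbn. unfold Rminus, z1, z2, z3; cbn.
  tauto.
Qed.

Definition quartic_dist (e p : state) : R :=
  (z1 p - z1 e) ^ 4 + (z2 p - z2 e) ^ 4 + (z3 p - z3 e) ^ 4.

Lemma pow4_ge_0 d : 0 <= d ^ 4.
Proof. replace (d ^ 4) with ((d * d) * (d * d)) by ring. apply Rle_0_sqr. Qed.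

Lemma pow4_gt_0 d : d <> 0 -> 0 < d ^ 4.
Proof.
  intros hd. replace (d ^ 4) with (Rsqr d * Rsqr d) by (unfold Rsqr; ring).
  pose proof (Rsqr_pos_lt d hd). nra.
Qed.

Lemma abs_lt_of_pow4_lt d eps : 0 < eps -> d ^ 4 < eps ^ 4 -> Rabs d < eps.
Proof.
  intros he H. destruct (Rlt_or_le (Rabs d) eps) as [h|h]; [exact h|exfalso].
  assert (E : d ^ 4 = Rabs d ^ 4)
    by (replace (Rabs d ^ 4) with (Rsqr (Rabs d) ^ 2) by (unfold Rsqr; ring);
        rewrite <- Rsqr_abs; unfold Rsqr; ring).
  pose proof (pow_incr eps (Rabs d) 4 (conj (Rlt_le _ _ he) h)). lra.
Qed.

Lemma ball_of_quartic_dist_lt e p eps : 0 < eps -> quartic_dist e p < eps ^ 4 -> ball e eps p.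
Proof.
  intros he H. unfold quartic_dist in H. apply ball_state.
  pose proof (pow4_ge_0 (z1 p - z1 e)). pose proof (pow4_ge_0 (z2 p - z2 e)).
  pose proof (pow4_ge_0 (z3 p - z3 e)).
  repeat split; apply abs_lt_of_pow4_lt; lra.
Qed.

(** * First integrals and Lyapunov stability *)

Definition first_integral (f : state -> state) (I : state -> R) : Prop :=
  forall z, is_trajectory f z -> forall t, 0 <= t -> I (z t) = I (z 0).

Lemma exists_small_scale (A c : R) : 0 < c ->
  exists eta, 0 < eta /\ eta <= 1 /\ forall d, Rabs d <= eta -> A * d < c.
Proof.
  intros hc. pose proof (Rabs_pos A).
  exists (Rmin 1 (c / (Rabs A + 1))). repeat split.
  - apply Rmin_pos; [lra|apply Rdiv_lt_0_compat; lra].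
  - apply Rmin_l.
  - intros d Hd.
    assert (Hd' : Rabs d <= c / (Rabs A + 1)) by (eapply Rle_trans; [exact Hd|apply Rmin_r]).
    assert (A * d <= Rabs A * Rabs d) by (rewrite <- Rabs_mult; apply Rle_abs).
    assert (Rabs A * Rabs d <= Rabs A * (c / (Rabs A + 1)))
      by (apply Rmult_le_compat_l; assumption).
    assert (Rabs A * (c / (Rabs A + 1)) < c)
      by (apply (Rmult_lt_reg_r (Rabs A + 1)); [lra|]; field_simplify; lra).
    lra.
Qed.

(* [D] is conserved and small near [e], so the quartic bound confines every trajectory that
   starts near [e] and remains in [Q]; [Q] need only be invariant for such trajectories. *)
Lemma lyap_stable_of_isolating_integral (f : state -> state) (e : state)
    (D : state -> R) (Q : state -> Prop) (A : R) :
  first_integral f D -> continuous D e -> D e = 0 -> locally e Q ->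
  (exists eta0, 0 < eta0 /\ forall z, is_trajectory f z -> D (z 0) < eta0 -> Q (z 0) ->
     forall t, 0 <= t -> Q (z t)) ->
  (forall p, Q p -> D p <= 1 -> quartic_dist e p <= A * D p) ->
  lyap_stable f e.
Proof.
  intros HD HDc HDe HQ [eta0 [Heta0 HQinv]] Hbound U [eps HU].
  pose proof (cond_pos eps) as Heps.
  destruct (exists_small_scale A (eps ^ 4)) as [eta1 [Heta1 [Heta1_le HA]]];
    [apply pow_lt; lra|].
  set (eta := Rmin eta0 eta1).
  assert (Heta : 0 < eta) by (apply Rmin_pos; lra).
  assert (eta <= eta0 /\ eta <= eta1) by (split; [apply Rmin_l|apply Rmin_r]).
  exists (fun p => Rabs (D p) < eta /\ Q p). split.
  - apply filter_and; [|exact HQ].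
    apply (filter_imp (fun p => ball (D e) (mkposreal eta Heta) (D p))).
    + rewrite HDe. intros p. unfold ball; cbn. unfold AbsRing_ball, abs, minus, plus, opp; cbn.
      now rewrite Ropp_0, Rplus_0_r.
    + now apply filterlim_locally.
  - intros z Hz [Hz0 HQz0] t Ht. apply HU.
    rewrite <- (HD z Hz t Ht) in Hz0.
    assert (HQt : Q (z t)).
    { apply (HQinv z Hz); auto. rewrite <- (HD z Hz t Ht). apply Rabs_def2 in Hz0. lra. }
    apply ball_of_quartic_dist_lt; [exact Heps|].
    eapply Rle_lt_trans; [apply Hbound; [exact HQt|apply Rabs_def2 in Hz0; lra]|].
    apply HA. lra.
Qed.

Lemma lyap_stable_of_isolating_integral_global (f : state -> state) (e : state)
    (D : state -> R) (A : R) :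
  first_integral f D -> continuous D e -> D e = 0 ->
  (forall p, D p <= 1 -> quartic_dist e p <= A * D p) -> lyap_stable f e.
Proof.
  intros HD HDc HDe Hbound.
  apply (lyap_stable_of_isolating_integral f e D (fun _ => True) A); auto.
  - now exists (mkposreal 1 Rlt_0_1).
  - exists 1. split; [lra|auto].
Qed.

Lemma lyap_unstable_of_escaping_orbit (f : state -> state) (e : state)
    (phi : R -> state) (U : state -> Prop) :
  (forall t, is_derive phi t (f (phi t))) ->
  filterlim phi (Rbar_locally m_infty) (locally e) ->
  locally e U -> ~ U (phi 0) -> lyap_unstable f e.
Proof.
  intros Hphi Hlim HU Hout Hst.
  destruct (Hst U HU) as [V [HV Htraj]].
  destruct (Hlim V HV) as [M HM].
  set (s := Rmin 0 (M - 1)).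
  assert (Hs : s <= 0 /\ s < M)
    by (unfold s; split; [apply Rmin_l|pose proof (Rmin_r 0 (M - 1)); lra]).
  assert (Hz : is_trajectory f (fun t => phi (t + s))).
  { intros t _. rewrite <- (scal_one (f (phi (t + s)))).
    apply (is_derive_comp phi (fun t => t + s)); [apply Hphi|].
    auto_derive; auto. }
  apply Hout. replace 0 with (- s + s) by ring.
  apply (Htraj _ Hz); [|lra].
  apply HM. lra.
Qed.

Lemma continuous_z1 (p : state) : continuous z1 p.
Proof. destruct p as [[a b] c]. apply (continuous_comp fst fst); apply continuous_fst. Qed.

Lemma continuous_z2 (p : state) : continuous z2 p.
Proof.
  destruct p as [[a b] c].
  apply (continuous_comp fst snd); [apply continuous_fst|apply continuous_snd].
Qed.

Lemma continuous_z3 (p : state) : continuous z3 p.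
Proof. destruct p as [[a b] c]. apply continuous_snd. Qed.

Lemma continuous_monomial (g : state -> R) (a : R) (n : nat) p :
  continuous g p -> continuous (fun q => a * g q ^ n) p.
Proof.
  intros Hg. apply (continuous_comp g (fun u => a * u ^ n)); [exact Hg|].
  apply (ex_derive_continuous (fun u : R => a * u ^ n)). auto_derive. auto.
Qed.

Lemma continuous_ext_R (g h : state -> R) p :
  (forall q, g q = h q) -> continuous g p -> continuous h p.
Proof. apply continuous_ext. Qed.

Lemma continuous_Rplus (g h : state -> R) p :
  continuous g p -> continuous h p -> continuous (fun q => g q + h q) p.
Proof. apply (continuous_plus (K := R_AbsRing) (V := R_NormedModule)). Qed.

(** * The first integrals of the system *)

Definition integral1 (c1 c2 : R) (p : state) : R := c2 * z1 p ^ 2 + c1 * z2 p ^ 2.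
Definition integral2 (k : R) (p : state) : R := 2 * k * z2 p - z3 p ^ 2.

Definition integral_deviation (c1 c2 k : R) (e p : state) : R :=
  Rabs (integral1 c1 c2 p - integral1 c1 c2 e) + Rabs (integral2 k p - integral2 k e).

Lemma continuous_integral1 c1 c2 p : continuous (integral1 c1 c2) p.
Proof.
  apply continuous_Rplus; apply continuous_monomial; [apply continuous_z1|apply continuous_z2].
Qed.

Lemma continuous_integral2 k p : continuous (integral2 k) p.
Proof.
  apply (continuous_ext_R (fun q => 2 * k * z2 q ^ 1 + (-1) * z3 q ^ 2));
    [intros q; unfold integral2; ring|].
  apply continuous_Rplus; apply continuous_monomial; [apply continuous_z2|apply continuous_z3].
Qed.

Lemma continuous_integral_deviation c1 c2 k e p :
  continuous (integral_deviation c1 c2 k e) p.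
Proof.
  assert (Hdev : forall I : state -> R, (forall q, continuous I q) ->
            continuous (fun q => Rabs (I q - I e)) p).
  { intros I HI. apply (continuous_comp (fun q => I q + (- I e)) Rabs); [|apply continuous_Rabs].
    apply continuous_Rplus; [apply HI|apply continuous_const]. }
  apply continuous_Rplus; apply Hdev; [apply continuous_integral1|apply continuous_integral2].
Qed.

Lemma field_coords c1 c2 k p :
  field c1 c2 k p = (z2 p * z3 p / c2, - (z1 p * z3 p) / c1, - (k / c1) * z1 p).
Proof. now destruct p as [[x y] w]. Qed.

Section Trajectory.
Variables (c1 c2 k : R) (z : R -> state).
Hypothesis Hz : is_trajectory (field c1 c2 k) z.

Lemma is_derive_traj_z1 t : 0 <= t ->
  is_derive (fun s => z1 (z s)) t (z2 (z t) * z3 (z t) / c2).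
Proof.
  intros Ht. generalize (Hz t Ht). rewrite field_coords.
  intros H. exact (is_derive_fst _ t _ (is_derive_fst z t _ H)).
Qed.

Lemma is_derive_traj_z2 t : 0 <= t ->
  is_derive (fun s => z2 (z s)) t (- (z1 (z t) * z3 (z t)) / c1).
Proof.
  intros Ht. generalize (Hz t Ht). rewrite field_coords.
  intros H. exact (is_derive_snd _ t _ (is_derive_fst z t _ H)).
Qed.

Lemma is_derive_traj_z3 t : 0 <= t ->
  is_derive (fun s => z3 (z s)) t (- (k / c1) * z1 (z t)).
Proof.
  intros Ht. generalize (Hz t Ht). rewrite field_coords.
  intros H. exact (is_derive_snd z t _ H).
Qed.

End Trajectory.

Lemma first_integral_integral1 c1 c2 k :
  c1 <> 0 -> c2 <> 0 -> first_integral (field c1 c2 k) (integral1 c1 c2).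
Proof.
  intros hc1 hc2 z Hz. apply (constant_of_is_derive_0 (fun s => integral1 c1 c2 (z s))).
  intros s Hs. unfold integral1. eapply is_derive_eq.
  - apply (is_derive_plus (fun s => c2 * z1 (z s) ^ 2) (fun s => c1 * z2 (z s) ^ 2));
      apply is_derive_scal, is_derive_pow;
      [apply (is_derive_traj_z1 c1 c2 k z Hz s Hs)|apply (is_derive_traj_z2 c1 c2 k z Hz s Hs)].
  - cbn. field. auto.
Qed.

Lemma first_integral_integral2 c1 c2 k :
  c1 <> 0 -> first_integral (field c1 c2 k) (integral2 k).
Proof.
  intros hc1 z Hz. apply (constant_of_is_derive_0 (fun s => integral2 k (z s))).
  intros s Hs. unfold integral2. eapply is_derive_eq.
  - apply (is_derive_minus (fun s => 2 * k * z2 (z s)) (fun s => z3 (z s) ^ 2));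
      [apply is_derive_scal|apply is_derive_pow];
      [apply (is_derive_traj_z2 c1 c2 k z Hz s Hs)|apply (is_derive_traj_z3 c1 c2 k z Hz s Hs)].
  - cbn. field. auto.
Qed.

Lemma first_integral_integral_deviation c1 c2 k e :
  c1 <> 0 -> c2 <> 0 -> first_integral (field c1 c2 k) (integral_deviation c1 c2 k e).
Proof.
  intros hc1 hc2 z Hz t Ht. unfold integral_deviation.
  now rewrite (first_integral_integral1 c1 c2 k hc1 hc2 z Hz t Ht),
    (first_integral_integral2 c1 c2 k hc1 z Hz t Ht).
Qed.

(** * Isolation of the equilibria by the first integrals *)

Lemma pow4_le_of_sq_bound x c B q : 0 < c -> 0 <= q <= 1 ->
  c * x ^ 2 <= B * q -> x ^ 4 <= B ^ 2 / c ^ 2 * q.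
Proof.
  intros hc hq H.
  assert (Hx : x ^ 2 <= B / c * q)
    by (apply (Rmult_le_reg_l c); [lra|];
        replace (c * (B / c * q)) with (B * q) by (field; lra); lra).
  assert (0 <= x ^ 2) by apply pow2_ge_0.
  replace (x ^ 4) with (x ^ 2 * x ^ 2) by ring.
  replace (B ^ 2 / c ^ 2 * q) with ((B / c) ^ 2 * q) by (field; lra).
  assert (x ^ 2 * x ^ 2 <= (B / c * q) * (B / c * q)) by (apply Rmult_le_compat; lra).
  assert ((B / c) ^ 2 * (q * q) <= (B / c) ^ 2 * q)
    by (apply Rmult_le_compat_l; [apply pow2_ge_0|nra]).
  nra.
Qed.

Lemma sq_le_of_abs_le b q : Rabs b <= q -> q <= 1 -> b ^ 2 <= q.
Proof.
  intros Hb Hq. rewrite <- (pow2_abs b). pose proof (Rabs_pos b).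
  assert (Rabs b * Rabs b <= Rabs b * 1) by (apply Rmult_le_compat_l; lra). nra.
Qed.

Lemma quartic_bound_of_sq_bounds c1 c2 k B : 0 < c1 -> 0 < c2 ->
  exists A, forall x y s b q, 0 <= q <= 1 -> c2 * x ^ 2 <= B * q -> c1 * y ^ 2 <= B * q ->
    Rabs b <= q -> s = 2 * k * y - b -> x ^ 4 + y ^ 4 + s ^ 2 <= A * q.
Proof.
  intros hc1 hc2. exists (B ^ 2 / c2 ^ 2 + B ^ 2 / c1 ^ 2 + 8 * k ^ 2 * B / c1 + 2).
  intros x y s b q Hq Hx Hy Hb ->.
  assert (Hy2 : y ^ 2 <= B / c1 * q)
    by (apply (Rmult_le_reg_l c1); [lra|];
        replace (c1 * (B / c1 * q)) with (B * q) by (field; lra); lra).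
  assert (Hs : (2 * k * y - b) ^ 2 <= 8 * k ^ 2 * B / c1 * q + 2 * q).
  { assert (2 * (2 * k * y) ^ 2 <= 8 * k ^ 2 * B / c1 * q).
    { replace (2 * (2 * k * y) ^ 2) with (8 * k ^ 2 * y ^ 2) by ring.
      replace (8 * k ^ 2 * B / c1 * q) with (8 * k ^ 2 * (B / c1 * q)) by (field; lra).
      apply Rmult_le_compat_l; [nra|exact Hy2]. }
    pose proof (sq_le_of_abs_le b q Hb (proj2 Hq)).
    pose proof (pow2_ge_0 (2 * k * y + b)). nra. }
  pose proof (pow4_le_of_sq_bound x c2 B q hc2 Hq Hx).
  pose proof (pow4_le_of_sq_bound y c1 B q hc1 Hq Hy).
  lra.
Qed.

Lemma quartic_bound_origin c1 c2 k : 0 < c1 -> 0 < c2 ->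
  exists A, forall p, integral_deviation c1 c2 k (0, 0, 0) p <= 1 ->
    quartic_dist (0, 0, 0) p <= A * integral_deviation c1 c2 k (0, 0, 0) p.
Proof.
  intros hc1 hc2. destruct (quartic_bound_of_sq_bounds c1 c2 k 1 hc1 hc2) as [A HA].
  exists A. intros [[x y] w].
  unfold integral_deviation, quartic_dist, integral1, integral2, z1, z2, z3. cbn [fst snd].
  set (a := c2 * x ^ 2 + c1 * y ^ 2 - (c2 * 0 ^ 2 + c1 * 0 ^ 2)).
  set (b := 2 * k * y - w ^ 2 - (2 * k * 0 - 0 ^ 2)).
  intros Hq. pose proof (Rabs_pos a). pose proof (Rabs_pos b).
  replace ((x - 0) ^ 4 + (y - 0) ^ 4 + (w - 0) ^ 4) with (x ^ 4 + y ^ 4 + (w ^ 2) ^ 2) by ring.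
  apply (HA x y (w ^ 2) b); try lra.
  - pose proof (Rle_abs a). unfold a in *. nra.
  - pose proof (Rle_abs a). unfold a in *. nra.
  - unfold b. ring.
Qed.

Lemma quartic_bound_y_axis c1 c2 k m : 0 < c1 -> 0 < c2 -> 0 < k * m ->
  exists A, forall p, integral_deviation c1 c2 k (0, m, 0) p <= 1 ->
    quartic_dist (0, m, 0) p <= A * integral_deviation c1 c2 k (0, m, 0) p.
Proof.
  intros hc1 hc2 hkm. set (B := 1 + c1 * (m / k)).
  destruct (quartic_bound_of_sq_bounds c1 c2 k B hc1 hc2) as [A HA].
  exists A. intros [[x y] w].
  unfold integral_deviation, quartic_dist, integral1, integral2, z1, z2, z3. cbn [fst snd].
  set (a := c2 * x ^ 2 + c1 * y ^ 2 - (c2 * 0 ^ 2 + c1 * m ^ 2)).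
  set (b := 2 * k * y - w ^ 2 - (2 * k * m - 0 ^ 2)).
  intros Hq. pose proof (Rabs_pos a). pose proof (Rabs_pos b).
  pose proof (Rle_abs a). pose proof (Rle_abs (- b)). rewrite Rabs_Ropp in *.
  assert (hk : k <> 0) by (intros ->; lra).
  assert (hmk : 0 < m / k) by (replace (m / k) with (k * m / k ^ 2) by (field; lra);
                               apply Rdiv_lt_0_compat; [lra|nra]).
  (* Since [w^2 >= 0], [2 k (y - m) >= -|b|]; as [m] and [k] have the same sign, this
     bounds [m (y - m)] from below, which controls the cross term of [a]. *)
  assert (Hmv : - (m / k) * Rabs b <= 2 * m * (y - m)).
  { replace (2 * m * (y - m)) with (m / k * (2 * k * (y - m))) by (field; lra).
    assert (- Rabs b <= 2 * k * (y - m)) by (pose proof (pow2_ge_0 w); unfold b in *; nra).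
    nra. }
  assert (Hsum : c2 * x ^ 2 + c1 * (y - m) ^ 2 <= B * (Rabs a + Rabs b)).
  { assert (E : c2 * x ^ 2 + c1 * (y - m) ^ 2 = a - c1 * (2 * m * (y - m))) by (unfold a; ring).
    assert (c1 * (- (m / k) * Rabs b) <= c1 * (2 * m * (y - m)))
      by (apply Rmult_le_compat_l; lra).
    assert (0 <= c1 * (m / k) * Rabs a) by (apply Rmult_le_pos; [nra|lra]).
    unfold B. nra. }
  pose proof (pow2_ge_0 x). pose proof (pow2_ge_0 (y - m)).
  replace ((x - 0) ^ 4 + (y - m) ^ 4 + (w - 0) ^ 4) with (x ^ 4 + (y - m) ^ 4 + (w ^ 2) ^ 2)
    by ring.
  apply (HA x (y - m) (w ^ 2) b); try nra.
  unfold b. ring.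
Qed.

Lemma sub_sq_le_of_same_sign m w : 0 < m * w -> (w - m) ^ 2 * m ^ 2 <= (w ^ 2 - m ^ 2) ^ 2.
Proof.
  intros H. replace ((w ^ 2 - m ^ 2) ^ 2) with ((w - m) ^ 2 * (w + m) ^ 2) by ring.
  apply Rmult_le_compat_l; [apply pow2_ge_0|nra].
Qed.

Lemma quartic_bound_w_axis c1 c2 k m : 0 < c1 -> 0 < c2 -> m <> 0 ->
  exists A, forall p, integral_deviation c1 c2 k (0, 0, m) p <= 1 ->
    (z3 p = 0 -> m ^ 4 <= A * integral_deviation c1 c2 k (0, 0, m) p) /\
    (0 < m * z3 p -> quartic_dist (0, 0, m) p <= A * integral_deviation c1 c2 k (0, 0, m) p).
Proof.
  intros hc1 hc2 hm. destruct (quartic_bound_of_sq_bounds c1 c2 k 1 hc1 hc2) as [A HA].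
  pose proof (pow4_gt_0 m hm) as hm4.
  exists (A + A ^ 2 / m ^ 4). intros [[x y] w].
  unfold integral_deviation, quartic_dist, integral1, integral2, z1, z2, z3. cbn [fst snd].
  set (a := c2 * x ^ 2 + c1 * y ^ 2 - (c2 * 0 ^ 2 + c1 * 0 ^ 2)).
  set (b := 2 * k * y - w ^ 2 - (2 * k * 0 - m ^ 2)).
  set (q := Rabs a + Rabs b). intros Hq.
  pose proof (Rabs_pos a). pose proof (Rabs_pos b). pose proof (Rle_abs a).
  assert (Hcore : x ^ 4 + y ^ 4 + (w ^ 2 - m ^ 2) ^ 2 <= A * q).
  { apply (HA x y _ b); unfold q in *; try lra.
    - unfold a in *. nra.
    - unfold a in *. nra.
    - unfold b. ring. }
  pose proof (pow4_ge_0 x). pose proof (pow4_ge_0 y). pose proof (pow2_ge_0 (w ^ 2 - m ^ 2)).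
  assert (0 <= A ^ 2 / m ^ 4 * q)
    by (apply Rmult_le_pos; [apply Rdiv_le_0_compat; nra|unfold q; lra]).
  split.
  - intros ->. assert (m ^ 4 = (0 ^ 2 - m ^ 2) ^ 2) by ring.
    rewrite Rmult_plus_distr_r. lra.
  - intros Hmw.
    assert (Hsq : (w - m) ^ 4 * m ^ 4 <= A ^ 2 * q).
    { pose proof (sub_sq_le_of_same_sign m w Hmw).
      assert (((w - m) ^ 2 * m ^ 2) ^ 2 <= ((w ^ 2 - m ^ 2) ^ 2) ^ 2)
        by (apply pow_incr; split; [apply Rmult_le_pos; apply pow2_ge_0|assumption]).
      assert (((w ^ 2 - m ^ 2) ^ 2) ^ 2 <= (A * q) ^ 2) by (apply pow_incr; lra).
      assert ((A * q) ^ 2 <= A ^ 2 * q)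
        by (replace ((A * q) ^ 2) with (A ^ 2 * (q * q)) by ring;
            apply Rmult_le_compat_l; [apply pow2_ge_0|unfold q in *; nra]).
      replace ((w - m) ^ 4 * m ^ 4) with (((w - m) ^ 2 * m ^ 2) ^ 2) by ring. lra. }
    assert ((w - m) ^ 4 <= A ^ 2 / m ^ 4 * q).
    { apply (Rmult_le_reg_r (m ^ 4)); [exact hm4|].
      replace (A ^ 2 / m ^ 4 * q * m ^ 4) with (A ^ 2 * q) by (field; lra). exact Hsq. }
    replace ((x - 0) ^ 4 + (y - 0) ^ 4 + (w - m) ^ 4) with (x ^ 4 + y ^ 4 + (w - m) ^ 4)
      by ring.
    rewrite Rmult_plus_distr_r. lra.
Qed.

Lemma integral_deviation_self c1 c2 k e : integral_deviation c1 c2 k e e = 0.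
Proof. unfold integral_deviation. rewrite !Rminus_diag, Rabs_R0. ring. Qed.

Lemma lyap_stable_origin c1 c2 k : 0 < c1 -> 0 < c2 ->
  lyap_stable (field c1 c2 k) (0, 0, 0).
Proof.
  intros hc1 hc2. destruct (quartic_bound_origin c1 c2 k hc1 hc2) as [A HA].
  apply (lyap_stable_of_isolating_integral_global _ _ (integral_deviation c1 c2 k (0, 0, 0)) A);
    [| | |exact HA].
  - apply first_integral_integral_deviation; lra.
  - apply continuous_integral_deviation.
  - apply integral_deviation_self.
Qed.

Lemma lyap_stable_y_axis c1 c2 k m : 0 < c1 -> 0 < c2 -> 0 < k * m ->
  lyap_stable (field c1 c2 k) (0, m, 0).
Proof.
  intros hc1 hc2 hkm. destruct (quartic_bound_y_axis c1 c2 k m hc1 hc2 hkm) as [A HA].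
  apply (lyap_stable_of_isolating_integral_global _ _ (integral_deviation c1 c2 k (0, m, 0)) A);
    [| | |exact HA].
  - apply first_integral_integral_deviation; lra.
  - apply continuous_integral_deviation.
  - apply integral_deviation_self.
Qed.

Lemma integral_deviation_ge_0 c1 c2 k e p : 0 <= integral_deviation c1 c2 k e p.
Proof.
  unfold integral_deviation.
  pose proof (Rabs_pos (integral1 c1 c2 p - integral1 c1 c2 e)).
  pose proof (Rabs_pos (integral2 k p - integral2 k e)). lra.
Qed.

Lemma sign_z3_preserved c1 c2 k m : 0 < c1 -> 0 < c2 -> m <> 0 ->
  exists eta0, 0 < eta0 /\ forall z, is_trajectory (field c1 c2 k) z ->
    integral_deviation c1 c2 k (0, 0, m) (z 0) < eta0 -> 0 < m * z3 (z 0) ->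
    forall t, 0 <= t -> 0 < m * z3 (z t).
Proof.
  intros hc1 hc2 hm. destruct (quartic_bound_w_axis c1 c2 k m hc1 hc2 hm) as [A HA].
  pose proof (pow4_gt_0 m hm) as hm4.
  destruct (exists_small_scale A (m ^ 4) hm4) as [eta [Heta [Heta1 Hsmall]]].
  exists eta. split; [exact Heta|]. intros z Hz Hz0 Hpos.
  apply (positive_of_nonvanishing (fun s => m * z3 (z s))); [| |exact Hpos].
  - intros t Ht. apply (ex_derive_continuous (K := R_AbsRing) (V := R_NormedModule)).
    eexists. apply is_derive_scal, (is_derive_traj_z3 c1 c2 k z Hz t Ht).
  - intros t Ht Hw. apply Rmult_integral in Hw. destruct Hw as [Hw|Hw]; [exact (hm Hw)|].
    rewrite <- (first_integral_integral_deviation c1 c2 k (0, 0, m) ltac:(lra) ltac:(lra)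
                  z Hz t Ht) in Hz0.
    pose proof (integral_deviation_ge_0 c1 c2 k (0, 0, m) (z t)) as Hge.
    destruct (HA (z t)) as [Hzero _]; [lra|].
    specialize (Hzero Hw).
    assert (A * integral_deviation c1 c2 k (0, 0, m) (z t) < m ^ 4)
      by (apply Hsmall; rewrite Rabs_pos_eq; lra).
    lra.
Qed.

Lemma lyap_stable_w_axis c1 c2 k m : 0 < c1 -> 0 < c2 -> m <> 0 ->
  lyap_stable (field c1 c2 k) (0, 0, m).
Proof.
  intros hc1 hc2 hm. destruct (quartic_bound_w_axis c1 c2 k m hc1 hc2 hm) as [A HA].
  apply (lyap_stable_of_isolating_integral _ _ (integral_deviation c1 c2 k (0, 0, m))
           (fun p => 0 < m * z3 p) A).
  - apply first_integral_integral_deviation; lra.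
  - apply continuous_integral_deviation.
  - apply integral_deviation_self.
  - exists (mkposreal (Rabs m) (Rabs_pos_lt m hm)). intros p Hp.
    apply ball_state in Hp. destruct Hp as [_ [_ Hw]]. cbn in Hw.
    apply Rabs_def2 in Hw. destruct (Rcase_abs m) as [hneg|hpos];
      [rewrite Rabs_left in Hw by lra|rewrite Rabs_right in Hw by lra]; nra.
  - now apply sign_z3_preserved.
  - intros p HQ HDp. now apply HA.
Qed.

(** * A heteroclinic orbit when k m < 0 *)

Definition sin_2atan (u : R) : R := 2 * u / (1 + u ^ 2).
Definition cos_2atan (u : R) : R := (1 - u ^ 2) / (1 + u ^ 2).

Section Heteroclinic.
Variables (c1 c2 k m S r : R).
Hypotheses (hc1 : 0 < c1) (hm : m <> 0) (hS : 0 < S) (hr : 0 < r)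
  (hSS : S ^ 2 = - (k * m)) (hrr : r ^ 2 = c1 * c2).

(* Writing [u = tan (phi / 4)], this is [(sqrt (c1 / c2) m sin phi, m cos phi, 2 S sin (phi / 2))]
   when [r = sqrt (c1 c2)] and [S = sqrt (- k m)]: the curve on the level set of both integrals
   through [(0, m, 0)]. *)
Definition orbit_point (u : R) : state :=
  (2 * (c1 / r) * m * sin_2atan u * cos_2atan u, m * (1 - 2 * sin_2atan u ^ 2),
   2 * S * sin_2atan u).

Definition heteroclinic (t : R) : state := orbit_point (exp (S / r * t)).

Lemma heteroclinic_is_trajectory t : is_derive heteroclinic t (field c1 c2 k (heteroclinic t)).
Proof.
  assert (hk : k = - S ^ 2 / m) by (rewrite hSS; field; exact hm).
  assert (hc2 : c2 = r ^ 2 / c1) by (rewrite hrr; field; lra).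
  assert (hu : 0 < 1 + exp (S / r * t) ^ 2) by (pose proof (exp_pos (S / r * t)); nra).
  unfold heteroclinic. rewrite field_coords.
  unfold orbit_point, z1, z2, z3, sin_2atan, cos_2atan; cbn [fst snd].
  apply is_derive_pair; [apply is_derive_pair|]; auto_derive; try lra;
    rewrite ?hk, ?hc2; field; lra.
Qed.

Lemma continuous_orbit_point : continuous orbit_point 0.
Proof.
  assert (Hc : forall g : R -> R, ex_derive g 0 -> continuous g 0)
    by (intros g; apply (ex_derive_continuous (K := R_AbsRing) (V := R_NormedModule))).
  unfold orbit_point, sin_2atan, cos_2atan.
  apply continuous_pair; [apply continuous_pair|]; apply Hc; auto_derive; repeat split; lra.
Qed.

Lemma heteroclinic_tends_to_y_axis :
  filterlim heteroclinic (Rbar_locally m_infty) (locally (0, m, 0)).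
Proof.
  replace (0, m, 0) with (orbit_point 0)
    by (unfold orbit_point, sin_2atan, cos_2atan; f_equal; [f_equal|]; field; lra).
  apply (filterlim_comp _ _ _ (fun t => exp (S / r * t)) orbit_point _ (locally 0)).
  - apply (is_lim_comp exp (fun t => S / r * t) m_infty 0 m_infty).
    + apply is_lim_exp_m.
    + replace m_infty with (Rbar_mult (S / r) m_infty) at 2.
      * apply is_lim_scal_l, is_lim_id.
      * apply is_Rbar_mult_unique, is_Rbar_mult_sym, is_Rbar_mult_m_infty_pos.
        cbn. apply Rdiv_lt_0_compat; lra.
    + exists 0. intros. discriminate.
  - apply continuous_orbit_point.
Qed.

Lemma heteroclinic_0 : z2 (heteroclinic 0) = - m.
Proof. unfold heteroclinic, orbit_point, z2, sin_2atan; cbn. rewrite Rmult_0_r, exp_0. field. Qed.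

End Heteroclinic.

Lemma lyap_unstable_y_axis c1 c2 k m : 0 < c1 -> 0 < c2 -> m <> 0 -> k * m < 0 ->
  lyap_unstable (field c1 c2 k) (0, m, 0).
Proof.
  intros hc1 hc2 hm hkm.
  set (S := sqrt (- (k * m))). set (r := sqrt (c1 * c2)).
  assert (hS : 0 < S) by (apply sqrt_lt_R0; lra).
  assert (hr : 0 < r) by (apply sqrt_lt_R0; nra).
  assert (hSS : S ^ 2 = - (k * m)) by (rewrite <- Rsqr_pow2; apply Rsqr_sqrt; lra).
  assert (hrr : r ^ 2 = c1 * c2) by (rewrite <- Rsqr_pow2; apply Rsqr_sqrt; nra).
  apply (lyap_unstable_of_escaping_orbit _ _ (heteroclinic c1 m S r)
           (ball (0, m, 0) (Rabs m))).
  - intros t. apply (heteroclinic_is_trajectory c1 c2 k m S r); assumption.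
  - apply heteroclinic_tends_to_y_axis; assumption.
  - exists (mkposreal (Rabs m) (Rabs_pos_lt m hm)). now intros p.
  - intros Hball. apply ball_state in Hball. destruct Hball as [_ [H _]].
    rewrite heteroclinic_0 in H. cbn in H.
    replace (- m - m) with (2 * - m) in H by ring.
    rewrite Rabs_mult, Rabs_Ropp, (Rabs_pos_eq 2) in H by lra.
    pose proof (Rabs_pos_lt m hm). lra.
Qed.

Theorem proposition5p5 (c1 c2 k : R) (hc1 : 0 < c1) (hc2 : 0 < c2) (hk : k <> 0) :
  (lyap_stable (field c1 c2 k) (0, 0, 0)
   /\ (forall m : R, m <> 0 -> lyap_stable (field c1 c2 k) (0, 0, m)))
  /\ (forall m : R, m <> 0 ->
        (0 < k * m -> lyap_stable (field c1 c2 k) (0, m, 0))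
        /\ (k * m < 0 -> lyap_unstable (field c1 c2 k) (0, m, 0))).
Proof.
  split; [split|].
  - now apply lyap_stable_origin.
  - intros m hm. now apply lyap_stable_w_axis.
  - intros m hm. split.
    + now apply lyap_stable_y_axis.
    + now apply lyap_unstable_y_axis.
Qed.
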